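(* Let $n\geq2$ and $N_n=\langle a\mid a^n=0\rangle$. (i) The identities satisfied by $N_n$ are axiomatized by $xy\approx yx$, $x^n\approx y_1y_2\cdots y_n$, and all identities $x_1^{e_1}x_2^{e_2}\cdots x_m^{e_m}\approx x_1^{f_1}x_2^{f_2}\cdots x_m^{f_m}$ with $m\geq1$, $e_1,\dots,e_m,f_1,\dots,f_m\geq1$ such that (a) $e=f<n$ where $e=\sum_{i=1}^me_i$ and $f=\sum_{i=1}^mf_i$, and (b) for each $k\in\{1,\dots,m\}$, either $e_k=f_k$ or $e+e_k,f+f_k\geq n$. (ii) The subpseudovariety of $\llbracket N_n\rrbracket$ defined by the identity $x^n\approx x^{n-1}$ is the unique maximal subpseudovariety of $\llbracket N_n\rrbracket$.
   Context: $N_n=\{0,a,\dots,a^{n-1}\}$ is the monogenic nilpotent semigroup of order $n$. Identities are between words over a countably infinite alphabet of variables with distinct letters $x,y,x_i,y_i$. A pseudovariety is a class of finite semigroups closed under finite direct products, subsemigroups and homomorphic images; $\llbracket S\rrbracket$ is the pseudovariety generated by $S$; a maximal subpseudovariety is a maximal proper subpseudovariety. *)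

From mathcomp Require Import all_boot.
From mathcomp Require Import zify.
Set Implicit Arguments. Unset Strict Implicit. Unset Printing Implicit Defensive.

Record semigroup := Semigroup {
  sg_car :> Type;
  sg_mul : sg_car -> sg_car -> sg_car;
  sg_mulA : associative sg_mul }.

Record finSemigroup := FinSemigroup {
  fsg_car :> finType;
  fsg_mul : fsg_car -> fsg_car -> fsg_car;
  fsg_mulA : associative fsg_mul;
  fsg_nonempty : 0 < #|fsg_car| }.

Definition sg_of_fsg (S : finSemigroup) : semigroup := Semigroup (@fsg_mulA S).

(** * Words and identities.
    Variables are natural numbers (a countably infinite alphabet).
    A (nonempty) word is a first letter followed by a sequence of letters. *)
Definition word := (nat * seq nat)%type.
Definition identity := (word * word)%type.

Definition eval_word (S : semigroup) (s : nat -> S) (w : word) : S :=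
  foldl (fun acc y => sg_mul acc (s y)) (s w.1) w.2.

Definition sat (S : semigroup) (I : identity) : Prop :=
  forall s : nat -> S, eval_word s I.1 = eval_word s I.2.

Definition fsat (S : finSemigroup) (I : identity) : Prop := sat (sg_of_fsg S) I.

Definition consequence (Sigma : identity -> Prop) (I : identity) : Prop :=
  forall S : semigroup, (forall J, Sigma J -> sat S J) -> sat S I.

Definition word_of_seq (s : seq nat) : word := (head 0 s, behead s).

(** x_1^{e_1} ... x_m^{e_m} with x_i the variable i-1 *)
Definition pow_word (es : seq nat) : word :=
  word_of_seq (flatten (mkseq (fun i => nseq (nth 0 es i) i) (size es))).

(** Concrete model: carrier 'I_n (for n >= 1), where 0 is the zero and
    i >= 1 stands for a^i.  (We use n.-1.+1 so that the carrier is
    nonempty for every n; for n >= 1 this is just n.) *)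
Definition Nmul_nat (n i j : nat) : nat :=
  if (i == 0) || (j == 0) || (n <= i + j) then 0 else i + j.

Lemma Nmul_lt (n : nat) (i j : 'I_n.-1.+1) : Nmul_nat n.-1.+1 i j < n.-1.+1.
Proof.
rewrite /Nmul_nat; case: ifP => //; move/negbT; rewrite !negb_or -ltnNge.
by case/andP.
Qed.

Definition Nmul (n : nat) (i j : 'I_n.-1.+1) : 'I_n.-1.+1 := Ordinal (Nmul_lt i j).

Lemma NmulA (n : nat) : associative (@Nmul n).
Proof.
move=> [x hx] [y hy] [z hz]; apply: val_inj => /=.
rewrite /Nmul_nat.
by do !(case: ifP => /=); lia.
Qed.

Lemma N_nonempty (n : nat) : 0 < #|'I_n.-1.+1|.
Proof. by rewrite card_ord. Qed.

Definition Nsg (n : nat) : finSemigroup := FinSemigroup (@NmulA n) (N_nonempty n).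

Definition Sigma (n : nat) (I : identity) : Prop :=
  (* x y ~ y x *)
  I = ((0, [:: 1]), (1, [:: 0]))
  \/
  (* x^n ~ y_1 y_2 ... y_n *)
  I = ((0, nseq n.-1 0), (1, iota 2 n.-1))
  \/
  exists (es fs : seq nat),
    [/\ 1 <= size es /\ size fs = size es,
        all (fun e => 0 < e) es /\ all (fun f => 0 < f) fs,
        sumn es = sumn fs /\ sumn es < n,
        (forall k, k < size es ->
            nth 0 es k = nth 0 fs k \/
            (n <= sumn es + nth 0 es k /\ n <= sumn fs + nth 0 fs k))
      & I = (pow_word es, pow_word fs)].

Definition fclass := finSemigroup -> Prop.

Definition is_hom (S T : finSemigroup) (f : S -> T) : Prop :=
  forall x y, f (fsg_mul x y) = fsg_mul (f x) (f y).

Definition closed_sub (V : fclass) : Prop :=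
  forall (S T : finSemigroup) (f : T -> S), is_hom f -> injective f -> V S -> V T.

Definition closed_hom (V : fclass) : Prop :=
  forall (S T : finSemigroup) (f : S -> T), is_hom f -> (forall y, exists x, f x = y) ->
    V S -> V T.

Definition prod_mul (S T : finSemigroup) (x y : (S * T)%type) : (S * T)%type :=
  (fsg_mul x.1 y.1, fsg_mul x.2 y.2).

Lemma prod_mulA (S T : finSemigroup) : associative (@prod_mul S T).
Proof. by move=> [a b] [c d] [e f]; rewrite /prod_mul /= !fsg_mulA. Qed.

Lemma prod_nonempty (S T : finSemigroup) : 0 < #|{: S * T}|.
Proof. by rewrite card_prod muln_gt0 !fsg_nonempty. Qed.

Definition prod_sg (S T : finSemigroup) : finSemigroup :=
  FinSemigroup (@prod_mulA S T) (prod_nonempty S T).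

Definition unit_mul (x y : unit) : unit := tt.
Lemma unit_mulA : associative unit_mul. Proof. by []. Qed.
Lemma unit_nonempty : 0 < #|{: unit}|. Proof. by rewrite card_unit. Qed.
(** the trivial semigroup = the empty direct product *)
Definition trivial_sg : finSemigroup := FinSemigroup unit_mulA unit_nonempty.

Definition closed_prod (V : fclass) : Prop :=
  V trivial_sg /\ forall S T, V S -> V T -> V (prod_sg S T).

Definition pseudovariety (V : fclass) : Prop :=
  [/\ closed_sub V, closed_hom V & closed_prod V].

Definition generated (S : finSemigroup) : fclass :=
  fun T => forall V, pseudovariety V -> V S -> V T.

Definition subclass (U V : fclass) : Prop := forall S, U S -> V S.

Definition maximal_subpv (W V : fclass) : Prop :=
  [/\ pseudovariety W, subclass W V, ~ subclass V W &
      forall U, pseudovariety U -> subclass W U -> subclass U V ->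
        subclass U W \/ subclass V U].

Definition xn_xn1 (n : nat) : identity := ((0, nseq n.-1 0), (0, nseq n.-2 0)).

Definition Vsub (n : nat) : fclass :=
  fun T => generated (Nsg n) T /\ fsat T (xn_xn1 n).

(* Evaluated in N_n = <a | a^n = 0>, a word whose letters are sent to powers
   of a yields a raised to the total exponent, or 0 once that exponent reaches n.
   Comparing both sides of an identity u ~ v of N_n at the assignments sending
   one letter x to 0, a or a^2 and all other letters to a shows that either both
   sides have length at least n, or |u| = |v| < n, both sides have the same
   letters, and each letter x has |u|_x = |v|_x unless |u| + |u|_x and
   |v| + |v|_x both reach n.  Up to commutativity, u ~ v is then an identity of
   the third family of the basis; in the first case it follows from
   x^n ~ y_1...y_n, which makes all words of length at least n equal.  The third
   family holds in N_n since giving weight at least 2 to a letter on which the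
   exponents differ already sends both sides to 0.
   For (ii): a finite semigroup satisfying x^n ~ y_1...y_n but not
   x^n ~ x^(n-1) has an element t with t^n <> t^(n-1), and then t, ..., t^n form
   a copy of N_n with zero t^n.  So a subpseudovariety of [[N_n]] either
   satisfies x^n ~ x^(n-1) or contains N_n. *)

From mathcomp Require Import all_boot zify.
From Stdlib Require Import Classical.
Set Implicit Arguments. Unset Strict Implicit. Unset Printing Implicit Defensive.

Definition letters (w : word) : seq nat := w.1 :: w.2.

Lemma letters_word_of_seq (l : seq nat) : l != [::] -> letters (word_of_seq l) = l.
Proof. by case: l. Qed.

Section Evaluation.
Variable S : semigroup.
Local Notation mul := (@sg_mul S).

Lemma eval_wordE (s : nat -> S) w : eval_word s w = foldl mul (s w.1) (map s w.2).
Proof. by rewrite /eval_word; elim: w.2 (s w.1) => //= y l IH acc; rewrite IH. Qed.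

Lemma eq_eval_word (s1 s2 : nat -> S) w : s1 =1 s2 -> eval_word s1 w = eval_word s2 w.
Proof. by move=> e; rewrite !eval_wordE e (eq_map e). Qed.

(* [spow x k] is x^(k+1). *)
Definition spow (x : S) (k : nat) : S := iter k (mul^~ x) x.

Lemma eval_power (s : nat -> S) k : eval_word s (0, nseq k 0) = spow (s 0) k.
Proof.
rewrite eval_wordE map_nseq /spow /=; move: (s 0) => x.
suff -> : forall y, foldl mul y (nseq k x) = iter k (mul^~ x) y by [].
by elim: k => //= k IH y; rewrite IH -iterSr.
Qed.

Lemma spowD (x : S) a b : mul (spow x a) (spow x b) = spow x (a + b).+1.
Proof.
elim: b => [|b IH]; first by rewrite addn0.
by rewrite addnS {2}/spow iterS -/(spow x b) sg_mulA IH.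
Qed.

Hypothesis mulC : commutative mul.
(* [oAC] extends [mul] to a commutative monoid law on [option S], so that the
   bigop lemmas apply. *)
Local Notation oop := (oAC (@sg_mulA S) mulC).

Lemma eval_word_big (s : nat -> S) w :
  Some (eval_word s w) = \big[oop/None]_(y <- letters w) Some (s y).
Proof.
rewrite eval_wordE /letters big_cons; elim: w.2 (s w.1) => [|y l IH] x /=.
  by rewrite big_nil.
by rewrite big_cons oopA_subdef oACE IH.
Qed.

End Evaluation.

Lemma hom_eval_word (S T : finSemigroup) (f : S -> T) (s : nat -> S) w : is_hom f ->
  f (eval_word (S := sg_of_fsg S) s w) = eval_word (S := sg_of_fsg T) (f \o s) w.
Proof.
by move=> hf; rewrite !eval_wordE /=; elim: w.2 (s w.1) => //= y l IH x; rewrite IH hf.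
Qed.

Lemma prod_eval_word (S T : finSemigroup) (s : nat -> prod_sg S T) w :
  eval_word (S := sg_of_fsg (prod_sg S T)) s w =
  (eval_word (S := sg_of_fsg S) (fun k => (s k).1) w,
   eval_word (S := sg_of_fsg T) (fun k => (s k).2) w).
Proof.
rewrite !eval_wordE; elim: w.2 (s w.1) => [|y l IH] x /=; first by case: x.
exact: IH.
Qed.

Lemma fsat_pseudovariety (I : identity) : pseudovariety (fun T => fsat T I).
Proof.
split.
- move=> S T f hf finj hS s; apply: finj; rewrite !hom_eval_word //; exact: hS.
- move=> S T f hf fsurj hS s.
  have [x0 _] := fsurj (s 0).
  pose g y := odflt x0 [pick x | f x == y].
  have fgK y : f (g y) = y.
    rewrite /g; case: pickP => [x /eqP //| none].
    by have [x fx] := fsurj y; have := none x; rewrite fx eqxx.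
  have fgsK : f \o (g \o s) =1 s by move=> k; apply: fgK.
  move: (hS (g \o s)) => /(congr1 f); rewrite !hom_eval_word //.
  by rewrite !(@eq_eval_word (sg_of_fsg T) _ _ _ fgsK).
- split=> [s|S T hS hT s]; first by case: (eval_word _ _); case: (eval_word _ _).
  by rewrite !prod_eval_word hS hT.
Qed.

Lemma generated_pseudovariety (S : finSemigroup) : pseudovariety (generated S).
Proof.
split.
- move=> A B f hf finj hA V hV VS; have [Vsub _ _] := hV.
  exact: Vsub hf finj (hA V hV VS).
- move=> A B f hf fsurj hA V hV VS; have [_ Vhom _] := hV.
  exact: Vhom hf fsurj (hA V hV VS).
- split=> [V [_ _ []] //|A B hA hB V hV VS].
  by have [_ _ [_ Vprod]] := hV; apply: Vprod; [apply: hA | apply: hB].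
Qed.

Lemma pseudovarietyI (U V : fclass) : pseudovariety U -> pseudovariety V ->
  pseudovariety (fun T => U T /\ V T).
Proof.
move=> [Usub Uhom [U1 Uprod]] [Vsub Vhom [V1 Vprod]]; split.
- by move=> S T f hf finj [] /(Usub _ _ f hf finj) ? /(Vsub _ _ f hf finj).
- by move=> S T f hf fsurj [] /(Uhom _ _ f hf fsurj) ? /(Vhom _ _ f hf fsurj).
- by split=> // S T [? ?] [? ?]; split; [apply: Uprod | apply: Vprod].
Qed.

Lemma generated_self (S : finSemigroup) : generated S S.
Proof. by move=> V _. Qed.

Lemma generated_min (S : finSemigroup) (U : fclass) :
  pseudovariety U -> U S -> subclass (generated S) U.
Proof. by move=> hU US T; apply. Qed.

Lemma generated_fsat (S : finSemigroup) (I : identity) :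
  fsat S I -> subclass (generated S) (fun T => fsat T I).
Proof. exact: generated_min (fsat_pseudovariety I). Qed.

Lemma sumn_nth (l : seq nat) : sumn l = \sum_(i < size l) nth 0 l i.
Proof. by rewrite sumnE (big_nth 0) big_mkord. Qed.

Definition pow_letters (es : seq nat) : seq nat :=
  flatten (mkseq (fun i => nseq (nth 0 es i) i) (size es)).

Definition mults (xs l : seq nat) : seq nat := [seq count_mem x l | x <- xs].

Lemma mem_pow_letters es x : (x \in pow_letters es) = (x < size es) && (0 < nth 0 es x).
Proof.
apply/flatten_mapP/andP => [[i]|[lt_x_es es_x_gt0]].
  by rewrite mem_iota mem_nseq => /andP[_ ?] /andP[? /eqP->].
by exists x; rewrite ?mem_iota ?mem_nseq ?eqxx ?andbT.
Qed.

Lemma sumn_pow_letters es (g : nat -> nat) :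
  sumn (map g (pow_letters es)) = \sum_(i < size es) nth 0 es i * g i.
Proof.
rewrite map_flatten sumn_flatten -!map_comp sumnE big_map.
rewrite -(big_mkord xpredT (fun i => nth 0 es i * g i)) /index_iota subn0.
by apply: eq_bigr => i _ /=; rewrite map_nseq sumn_nseq mulnC.
Qed.

Lemma map_pow_letters (xs : seq nat) (F : nat -> nat) :
  map (nth 0 xs) (pow_letters (map F xs)) = flatten [seq nseq (F x) x | x <- xs].
Proof.
rewrite /pow_letters size_map map_flatten /mkseq -map_comp.
rewrite -[in RHS](mkseq_nth 0 xs) /mkseq -map_comp; congr flatten.
by apply/eq_in_map => i; rewrite mem_iota /= => hi; rewrite map_nseq (nth_map 0).
Qed.

Lemma perm_pow_letters_mults (xs l : seq nat) : uniq xs -> l =i xs ->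
  perm_eq l (map (nth 0 xs) (pow_letters (mults xs l))).
Proof.
move=> xs_uniq l_xs; rewrite map_pow_letters perm_sym.
have xs_undup : perm_eq xs (undup l).
  by apply: uniq_perm => // [|x]; rewrite ?undup_uniq // mem_undup l_xs.
exact: perm_trans (perm_flatten (perm_map _ xs_undup)) (perm_count_undup l).
Qed.

Lemma sumn_mults (xs l : seq nat) : uniq xs -> l =i xs -> sumn (mults xs l) = size l.
Proof.
move=> xs_uniq l_xs; rewrite (perm_size (perm_pow_letters_mults xs_uniq l_xs)).
rewrite map_pow_letters size_flatten /shape -map_comp.
by congr sumn; apply: eq_map => x; rewrite /= size_nseq.
Qed.

Lemma eval_word_mults (S : semigroup) (mulC : commutative (@sg_mul S)) (s : nat -> S) w xs :
  uniq xs -> letters w =i xs ->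
  eval_word s w = eval_word (s \o nth 0 xs) (pow_word (mults xs (letters w))).
Proof.
move=> xs_uniq w_xs; have pw := perm_pow_letters_mults xs_uniq w_xs.
apply: Some_inj; rewrite !(eval_word_big mulC) letters_word_of_seq -/(pow_letters _); last first.
  by rewrite -size_eq0 -(size_map (nth 0 xs)) -(perm_size pw).
by rewrite (perm_big _ pw) big_map.
Qed.

Definition xn_prod (n : nat) : identity := ((0, nseq n.-1 0), (1, iota 2 n.-1)).

Lemma Sigma_xn_prod n : Sigma n (xn_prod n).
Proof. by right; left. Qed.

Section LongWords.
Variables (S : semigroup) (m : nat).
Hypothesis hZ : sat S (xn_prod m.+1).

Lemma eval_long_word (s : nat -> S) w c : m < size (letters w) -> eval_word s w = spow c m.
Proof.
case: w => a l /= lt_m_l; rewrite eval_wordE /= -(cat_take_drop (size l - m) l) map_cat foldl_cat.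
move: (foldl _ (s a) _) (drop _ l) (size_drop (size l - m) l) => x l2.
rewrite subKn ?leqSS // => size_l2.
(* y_1 takes the product of all but the last m letters, y_2, ..., y_(m+1) these letters. *)
pose t k := if k is k'.+2 then s (nth 0 l2 k') else if k == 0 then c else x.
have := hZ t; rewrite eval_power eval_wordE /= => ->; congr foldl.
rewrite -(addn0 2) iotaDl -map_comp -{1}(mkseq_nth 0 l2) size_l2 /mkseq -map_comp.
exact: eq_map.
Qed.

End LongWords.

(* In [Nsg m.+1], [a^k] is represented by [k] if [k <= m] and by the zero [0]
   otherwise. *)
Definition Ntrunc (m k : nat) : nat := if m < k then 0 else k.

Definition Nprod (m : nat) (l : seq nat) : nat := if 0 \in l then 0 else Ntrunc m (sumn l).

Section Truncation.
Variable m : nat.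

Lemma Ntrunc_weighted_sum k (e f g : nat -> nat) :
  (forall i : 'I_k, 0 < g i) -> \sum_(i < k) e i = \sum_(i < k) f i ->
  (forall i : 'I_k, e i = f i \/ m < \sum_(i < k) e i + e i /\ m < \sum_(i < k) f i + f i) ->
  Ntrunc m (\sum_(i < k) e i * g i) = Ntrunc m (\sum_(i < k) f i * g i).
Proof.
move=> g_gt0 sum_ef ef.
(* A letter of weight at least 2 on which [e] and [f] differ pushes both weighted
   sums beyond [m]; otherwise they exceed the plain sums by the same amount. *)
have split_sum (h : nat -> nat) :
    \sum_(i < k) h i * g i = \sum_(i < k) h i + \sum_(i < k) h i * (g i).-1.
  rewrite -big_split; apply: eq_bigr => i _.
  by rewrite -{1}(prednK (g_gt0 i)) mulnS.
rewrite /Ntrunc !split_sum sum_ef.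
have [j /andP[ef_j g_j]|no_j] := pickP [pred i : 'I_k | (e i != f i) && (1 < g i)].
  have [/eqP|[e_big f_big]] := ef j; first by rewrite (negPf ef_j).
  have ge_j (h : nat -> nat) : h j <= \sum_(i < k) h i * (g i).-1.
    rewrite (bigD1 j) //= -{1}(muln1 (h j)); apply: leq_trans (leq_addr _ _).
    by rewrite leq_mul2l -subn1 subn_gt0 g_j orbT.
  have := ge_j e; have := ge_j f; rewrite sum_ef in e_big.
  by do 2 case: ifP; lia.
suff -> : \sum_(i < k) e i * (g i).-1 = \sum_(i < k) f i * (g i).-1 by [].
apply: eq_bigr => i _; move: (no_j i) => /=.
case: eqP => [->|_ /negbT] //; rewrite -leqNgt => g_le1.
have -> : (g i).-1 = 0 by lia.
by rewrite !muln0.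
Qed.

Lemma Nprod_point (x p : nat) (l : seq nat) : (0 < p) || (x \notin l) ->
  Nprod m [seq if y == x then p else 1 | y <- l] = Ntrunc m (size l + p.-1 * count_mem x l).
Proof.
move=> p_x; rewrite /Nprod; have -> : 0 \in [seq if y == x then p else 1 | y <- l] = false.
  apply/mapP => -[y y_l]; case: eqP => [y_x p0|//].
  by move: p_x; rewrite -p0 -y_x y_l.
congr Ntrunc; elim: l p_x => [|a l IH]; first by rewrite muln0.
rewrite /= in_cons negb_or => p_x.
rewrite IH; last by case/orP: p_x => [->|/andP[_ ->]]; rewrite ?orbT.
move: p_x; have [<-|_] := eqVneq a x => /= p_x; last by rewrite add0n.
by rewrite orbF in p_x; rewrite add1n mulnS -{1}(prednK p_x) !addSn addnCA.
Qed.

Lemma Nprod_point0 (x : nat) (l : seq nat) :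
  x \in l -> Nprod m [seq if y == x then 0 else 1 | y <- l] = 0.
Proof. by move=> x_l; rewrite /Nprod ifT //; apply/mapP; exists x; rewrite ?eqxx. Qed.

Lemma Ntrunc_minn a b :
  0 < a -> 0 < b -> Ntrunc m a = Ntrunc m b -> minn a m.+1 = minn b m.+1.
Proof. by rewrite /Ntrunc; do 2 case: ifP; lia. Qed.

Lemma Nprod_perm l1 l2 : perm_eq l1 l2 -> Nprod m l1 = Nprod m l2.
Proof. by move=> pl; rewrite /Nprod (perm_mem pl) (perm_sumn pl). Qed.

Lemma Nprod_long l : m < size l -> Nprod m l = 0.
Proof.
rewrite /Nprod /Ntrunc; case: ifP => // /negbT l_pos lt_m_l.
suff -> : m < sumn l by [].
apply: leq_trans lt_m_l _; elim: l l_pos => //= a l IH; rewrite in_cons negb_or.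
by case/andP=> a_pos /IH; rewrite eq_sym -lt0n in a_pos; lia.
Qed.

End Truncation.

Section NilpotentEvaluation.
Variable m : nat.
Local Notation N := (Nsg m.+1).
Local Notation Neval := (@eval_word (sg_of_fsg N)).

Lemma val_Neval (s : nat -> N) w : val (Neval s w) = Nprod m [seq val (s y) | y <- letters w].
Proof.
rewrite eval_wordE /letters /=; elim: w.2 (s w.1) => [|y l IH] x /=.
  rewrite /Nprod /Ntrunc in_cons in_nil /= addn0 orbF eq_sym.
  by have /= := ltn_ord x; case: (nat_of_ord x) => //= a; case: ifP; lia.
rewrite IH /Nprod /Ntrunc /= !in_cons /Nmul_nat.
have /= := ltn_ord x; have /= := ltn_ord (s y).
move: (nat_of_ord x) (nat_of_ord (s y)) (0 \in _) (sumn _) => a b [] t /=.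
  by rewrite !orbT.
by do !case: ifP; lia.
Qed.

Lemma pow_letters_pos es : all (fun e => 0 < e) es -> pow_letters es =i iota 0 (size es).
Proof.
move=> /all_nthP es_pos x; rewrite mem_pow_letters mem_iota /=.
by case: ltnP => //= lt_x_es; apply: es_pos.
Qed.

Lemma val_Neval_pow (s : nat -> N) es : 0 < size es -> all (fun e => 0 < e) es ->
  val (Neval s (pow_word es)) =
  if 0 \in [seq val (s i) | i <- iota 0 (size es)] then 0
  else Ntrunc m (\sum_(i < size es) nth 0 es i * val (s i)).
Proof.
move=> es_gt0 es_pos; have pow_es := pow_letters_pos es_pos.
have pow_es_nil : pow_letters es != [::].
  by apply/negP => /eqP es_nil; move: (pow_es 0); rewrite es_nil mem_iota es_gt0.
rewrite val_Neval (letters_word_of_seq pow_es_nil).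
by rewrite /Nprod (eq_mem_map _ pow_es) (sumn_pow_letters es (fun i => val (s i))).
Qed.

Lemma Nsg_sat_Sigma I : Sigma m.+1 I -> fsat N I.
Proof.
case=> [->|[->|[es [fs [[es_gt0 size_fs] [es_pos fs_pos] [sum_ef _] ef ->]]]]] s;
  apply: val_inj.
- by rewrite !val_Neval; apply: Nprod_perm; apply/permP => p /=; rewrite addnCA.
- by rewrite !val_Neval !Nprod_long //= size_map ?size_nseq ?size_iota.
rewrite !val_Neval_pow ?size_fs //; case: ifP => // /negbT s_pos.
apply: (Ntrunc_weighted_sum (e := nth 0 es) (f := nth 0 fs) (g := fun i => val (s i))) => [i||i].
- rewrite lt0n; apply: contraNneq s_pos => s_i.
  by apply/mapP; exists (val i); rewrite ?mem_iota ?s_i //= ltn_ord.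
- by move: sum_ef; rewrite !sumn_nth size_fs.
- by move: (ef i (ltn_ord i)); rewrite !sumn_nth size_fs.
Qed.

End NilpotentEvaluation.

Section NilpotentIdentities.
Variable m : nat.
Hypothesis m_gt0 : 0 < m.
Local Notation N := (Nsg m.+1).
Local Notation Neval := (@eval_word (sg_of_fsg N)).

Definition Npoint (x p : nat) (y : nat) : N := inord (if y == x then p else 1).

Lemma val_Neval_point x p w : p <= m ->
  val (Neval (Npoint x p) w) = Nprod m [seq if y == x then p else 1 | y <- letters w].
Proof.
move=> p_le_m; rewrite val_Neval; congr Nprod; apply: eq_map => y.
by apply: inordK; case: eqP.
Qed.

Lemma Nsg_not_xn_xn1 : ~ fsat N (xn_xn1 m.+1).
Proof.
move=> /(_ (Npoint 0 1)) /(congr1 val); rewrite !val_Neval_point // !Nprod_point //.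
by rewrite /letters /Ntrunc /= !size_nseq !mul0n !addn0 prednK // leqnn ltnn; lia.
Qed.

Section Satisfied.
Variables u v : word.
Hypothesis uv : fsat N (u, v).
Local Notation Lu := (letters u).
Local Notation Lv := (letters v).

Lemma Nsg_sat_point x p : p <= m ->
  Nprod m [seq if y == x then p else 1 | y <- Lu] = Nprod m [seq if y == x then p else 1 | y <- Lv].
Proof. by move=> p_le_m; rewrite -!val_Neval_point // uv. Qed.

Lemma Nsg_sat_size : minn (size Lu) m.+1 = minn (size Lv) m.+1.
Proof.
apply: Ntrunc_minn => //; have := Nsg_sat_point 0 m_gt0.
by rewrite !Nprod_point // !mul0n !addn0.
Qed.

Lemma Nsg_sat_mem x : size Lv <= m -> x \in Lu -> x \in Lv.
Proof.
move=> Lv_le_m x_u; apply: contraT => x_v; have := Nsg_sat_point x (leq0n m).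
by rewrite Nprod_point0 // Nprod_point // mul0n addn0 /Ntrunc ltnNge Lv_le_m.
Qed.

Lemma Nsg_sat_count x : x \in Lu -> x \in Lv ->
  minn (size Lu + count_mem x Lu) m.+1 = minn (size Lv + count_mem x Lv) m.+1.
Proof.
move=> x_u x_v; have cnt_u : 0 < count_mem x Lu by rewrite -has_count has_pred1.
have cnt_v : 0 < count_mem x Lv by rewrite -has_count has_pred1.
have [m_le1|m_gt1] := leqP m 1.
  by have: 0 < size Lu by []; have: 0 < size Lv by []; lia.
apply: Ntrunc_minn; rewrite ?addn_gt0 ?cnt_u ?cnt_v ?orbT //.
by have := Nsg_sat_point x m_gt1; rewrite !Nprod_point //= !mul1n.
Qed.

End Satisfied.

Lemma Nsg_sat_short u v : fsat N (u, v) -> size (letters u) <= m ->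
  size (letters u) = size (letters v) /\ letters u =i letters v.
Proof.
move=> uv short; have := Nsg_sat_size uv; rewrite (minn_idPl (leqW short)).
have [lt_m_v|short_v] := ltnP m (size (letters v)); first by lia.
rewrite (minn_idPl (leqW short_v)) => size_uv; split=> // x.
apply/idP/idP; first exact: Nsg_sat_mem.
by apply: Nsg_sat_mem; rewrite -?size_uv // => s; rewrite uv.
Qed.

Lemma Nsg_sat_Sigma_mults u v : fsat N (u, v) -> size (letters u) <= m ->
  Sigma m.+1 (pow_word (mults (undup (letters u)) (letters u)),
              pow_word (mults (undup (letters u)) (letters v))).
Proof.
move=> uv short; have [size_uv mem_uv] := Nsg_sat_short uv short.
set xs := undup (letters u).
have u_xs : letters u =i xs by move=> y; rewrite mem_undup.
have v_xs : letters v =i xs by move=> y; rewrite mem_undup mem_uv.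
have [sum_u sum_v] := (sumn_mults (undup_uniq _) u_xs, sumn_mults (undup_uniq _) v_xs).
have mults_pos l : l =i xs -> all (fun e => 0 < e) (mults xs l).
  by move=> l_xs; apply/allP => _ /mapP[y y_xs ->]; rewrite -has_count has_pred1 l_xs.
right; right; exists (mults xs (letters u)), (mults xs (letters v)); split=> //.
- by rewrite !size_map; split=> //; have := u_xs u.1; rewrite mem_head; case: (xs).
- by split; apply: mults_pos.
- by rewrite sum_u sum_v size_uv -size_uv.
move=> k; rewrite size_map => lt_k_xs; rewrite !(nth_map 0) // sum_u sum_v.
have y_u : nth 0 xs k \in letters u by rewrite u_xs mem_nth.
have := Nsg_sat_count uv y_u; rewrite -mem_uv => /(_ y_u); lia.
Qed.

Lemma Nsg_sat_consequence u v : fsat N (u, v) -> consequence (Sigma m.+1) (u, v).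
Proof.
move=> uv S hS s /=.
have mulC : commutative (@sg_mul S).
  by move=> a b; have := hS _ (or_introl erefl) (fun k => if k == 0 then a else b).
have long := eval_long_word (hS _ (Sigma_xn_prod m.+1)).
have [lt_m_u|short] := ltnP m (size (letters u)).
  have lt_m_v : m < size (letters v) by have := Nsg_sat_size uv; lia.
  by rewrite !(long _ _ (s 0)).
have [_ mem_uv] := Nsg_sat_short uv short.
have v_xs : letters v =i undup (letters u) by move=> y; rewrite mem_undup mem_uv.
rewrite !(eval_word_mults mulC s (undup_uniq (letters u))) //; last by move=> y; rewrite mem_undup.
exact: hS _ (Nsg_sat_Sigma_mults uv short) _.
Qed.

End NilpotentIdentities.

Section Embedding.
Variables (m : nat) (T : finSemigroup) (t : sg_of_fsg T).
Hypothesis hZ : fsat T (xn_prod m.+1).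
Local Notation tpow := (@spow (sg_of_fsg T) t).

Lemma tpow_absorb k : m <= k -> tpow k = tpow m.
Proof.
move=> le_m_k; rewrite -(eval_power (fun _ => t)) (eval_long_word hZ _ t) //.
by rewrite /letters /= size_nseq ltnS.
Qed.

(* [Nsg_embed] sends [a^i] to t^i and the zero to t^(m+1). *)
Definition Nsg_exponent (i : nat) : nat := if i == 0 then m else i.-1.

Definition Nsg_embed (i : Nsg m.+1) : T := tpow (Nsg_exponent i).

Lemma tpow_minn k : tpow k = tpow (minn k m).
Proof. by case: leqP => // /ltnW /tpow_absorb. Qed.

Lemma Nsg_embed_hom : is_hom Nsg_embed.
Proof.
move=> i j; rewrite /Nsg_embed [RHS](spowD t) tpow_minn [RHS]tpow_minn; congr tpow.
move: (ltn_ord i) (ltn_ord j); rewrite /Nsg_exponent /= /Nmul_nat.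
by move: (nat_of_ord i) (nat_of_ord j) => a b; do !case: ifP; lia.
Qed.

Hypothesis t_order : tpow m != tpow m.-1.

Lemma tpow_inj a b : a <= m -> b <= m -> tpow a = tpow b -> a = b.
Proof.
(* Multiplying by t^(m-1-a) turns t^(a+1) = t^(b+1), a < b, into t^m = t^(m+1). *)
wlog le_ab : a b / a <= b => [hwlog|a_le_m b_le_m tab].
  by case: (leqP a b) => [|/ltnW] le ? ? ?; [|apply/esym]; apply: hwlog.
case: (ltngtP a b) le_ab => // lt_ab _; case/eqP: t_order.
have [ea|na] := eqVneq a m.-1; first by rewrite -ea tab tpow_absorb //; lia.
have -> : m.-1 = (a + (m - 2 - a)).+1 by lia.
by rewrite -spowD tab spowD !tpow_absorb //; lia.
Qed.

Lemma Nsg_embed_inj : injective Nsg_embed.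
Proof.
move=> i j eij; apply: ord_inj.
have exp_le (k : Nsg m.+1) : Nsg_exponent k <= m.
  by have /= := ltn_ord k; rewrite /Nsg_exponent; case: ifP; lia.
move: (tpow_inj (exp_le i) (exp_le j) eij) (ltn_ord i) (ltn_ord j); rewrite /Nsg_exponent /=.
by move: (nat_of_ord i) (nat_of_ord j) => a b; do !case: ifP; lia.
Qed.

End Embedding.

Lemma Nsg_in_pseudovariety m (U : fclass) (T : finSemigroup) : pseudovariety U -> U T ->
  fsat T (xn_prod m.+1) -> ~ fsat T (xn_xn1 m.+1) -> U (Nsg m.+1).
Proof.
move=> [Usub _ _] UT hZ not_xn.
have [s] : exists s, eval_word (S := sg_of_fsg T) s (xn_xn1 m.+1).1 <>
                     eval_word s (xn_xn1 m.+1).2.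
  by apply: NNPP => no_s; apply: not_xn => s; apply: NNPP => ?; apply: no_s; exists s.
rewrite !eval_power /= => /eqP t_order.
exact: Usub _ _ _ (Nsg_embed_hom (s 0) hZ) (Nsg_embed_inj hZ t_order) UT.
Qed.

Section MaximalSubpseudovariety.
Variable m : nat.
Hypothesis m_gt0 : 0 < m.
Local Notation N := (Nsg m.+1).

Lemma Vsub_pseudovariety : pseudovariety (Vsub m.+1).
Proof. exact: pseudovarietyI (generated_pseudovariety N) (fsat_pseudovariety _). Qed.

Lemma generated_Nsg_subclass (U : fclass) (T : finSemigroup) : pseudovariety U -> U T ->
  generated N T -> ~ fsat T (xn_xn1 m.+1) -> subclass (generated N) U.
Proof.
move=> hU UT NT not_xn; apply: (generated_min hU) (Nsg_in_pseudovariety hU UT _ not_xn).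
exact: generated_fsat (Nsg_sat_Sigma (Sigma_xn_prod m.+1)) _ NT.
Qed.

Lemma Vsub_proper : ~ subclass (generated N) (Vsub m.+1).
Proof. by move=> /(_ N (@generated_self N)) [_]; apply: Nsg_not_xn_xn1. Qed.

Lemma Vsub_maximal : maximal_subpv (Vsub m.+1) (generated N).
Proof.
split=> [|||U hU VU UN]; [exact: Vsub_pseudovariety | by move=> T [] | exact: Vsub_proper |].
have [[T [UT not_xn]]|all_xn] := classic (exists T, U T /\ ~ fsat T (xn_xn1 m.+1)).
  by right; apply: generated_Nsg_subclass hU UT (UN T UT) not_xn.
left=> T UT; split; first exact: UN.
by apply: NNPP => not_xn; apply: all_xn; exists T.
Qed.

Lemma maximal_subpv_Vsub (W : fclass) : maximal_subpv W (generated N) ->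
  subclass W (Vsub m.+1) /\ subclass (Vsub m.+1) W.
Proof.
move=> [hW WN not_NW W_max].
have WV : subclass W (Vsub m.+1).
  move=> T WT; split; first exact: WN.
  by apply: NNPP => not_xn; apply: not_NW; apply: generated_Nsg_subclass hW WT (WN T WT) not_xn.
split=> //; have [] := W_max _ Vsub_pseudovariety WV (fun T => @proj1 _ _) => // NV.
by case: Vsub_proper.
Qed.

End MaximalSubpseudovariety.

Theorem proposition5p8 (n : nat) (hn : 2 <= n) :
  (forall I : identity, fsat (Nsg n) I <-> consequence (Sigma n) I)
  /\
  (maximal_subpv (Vsub n) (generated (Nsg n)) /\
   forall W : fclass, maximal_subpv W (generated (Nsg n)) ->
     subclass W (Vsub n) /\ subclass (Vsub n) W).
Proof.
case: n hn => [|m] // m_gt0.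
split=> [[u v]|]; last by split; [exact: Vsub_maximal | exact: maximal_subpv_Vsub].
split; first exact: Nsg_sat_consequence.
by move=> Sigma_uv; apply: Sigma_uv => J; apply: Nsg_sat_Sigma.
Qed.
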